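(* Fix $\rho<1$. There exist a function $F:\mathbb{N}\to\mathbb{N}$ and constants $C,c>0$ such that, for $G=G(\{h_i,n_i\})$ with $n_i=h_i^{15}$ and $h_i\geq F(n_{i-1}h_{i-1}^2)$ for all $i\geq1$, simple random walk on $G$ started at $0$ satisfies, for all $i\geq1$ and $k\geq1$, $$\mathbb{P}_0\big(\tau_0^{(\lceil Ckh_i\rceil)}<kh_in_i\big)\leq Ce^{-ck}.$$
   Context: Construction of $G(\{h_i,n_i\})$: let $(h_i)_{i\geq0},(n_i)_{i\geq0}$ be increasing sequences of positive integers; let $(E_i)_{i\geq1}$ be $3$-regular graphs with $|E_i|=n_i$ whose transition matrices have all eigenvalues other than $1$ of absolute value at most $\rho$, and $v_i\in E_i$ arbitrary. $G$ consists of the half-line $\mathbb{N}=\{0,1,\ldots\}$ with edges between consecutive integers, together with each $E_i$ attached by a single edge between $v_i$ and the integer vertex $h_i$. The $m$-th return time to $0$ is defined by $\tau_0^{(0)}=0$ and $\tau_0^{(m)}=\min\{t>\tau_0^{(m-1)}:X_t=0\}$ for $m\geq1$. *)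

From Stdlib Require Import Reals Lra Lia List ZArith.
Import ListNotations.
Open Scope R_scope.

(** Vertices of G({h_i,n_i}): [inl j] is the integer vertex j of the half-line;
    [inr (i, x)] is vertex x (0 <= x < n_i) of the expander E_i (i >= 1). *)
Definition Vtx := (nat + (nat * nat))%type.

Definition sumR (l : list R) : R := fold_right Rplus 0 l.

(** The graph E_i is given by a boolean adjacency [adj i : nat -> nat -> bool]
    on the vertex set {0,...,n_i - 1}. *)

Definition simple_3_regular (N : nat) (a : nat -> nat -> bool) : Prop :=
  (forall x y, (x < N)%nat -> (y < N)%nat -> a x y = a y x) /\
  (forall x, (x < N)%nat -> a x x = false) /\
  (forall x, (x < N)%nat -> length (filter (a x) (seq 0 N)) = 3%nat).

Definition trans3 (a : nat -> nat -> bool) (x y : nat) : R :=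
  if a x y then / 3 else 0.

Definition is_eigenpair (N : nat) (a : nat -> nat -> bool) (lam : R) (f : nat -> R) : Prop :=
  (exists x, (x < N)%nat /\ f x <> 0) /\
  forall x, (x < N)%nat ->
    sumR (map (fun y => trans3 a x y * f y) (seq 0 N)) = lam * f x.

(** All eigenvalues (counted with multiplicity) other than the trivial eigenvalue 1
    have absolute value at most rho: the eigenvalue 1 is simple (its eigenspace is the
    constants) and every other eigenvalue lam satisfies |lam| <= rho.  (The matrix is
    symmetric, so all eigenvalues are real and algebraic = geometric multiplicity.) *)
Definition spectral_bound (rho : R) (N : nat) (a : nat -> nat -> bool) : Prop :=
  forall lam f, is_eigenpair N a lam f ->
    (lam = 1 -> forall x y, (x < N)%nat -> (y < N)%nat -> f x = f y) /\
    (lam <> 1 -> Rabs lam <= rho).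

(** The integer vertex j is joined to j-1 (if j>0),
    j+1 and to v_i for every i >= 1 with h_i = j (such i satisfy i < j since h is
    strictly increasing with h_0 >= 1). *)
Definition nbrs (h n v : nat -> nat) (adj : nat -> nat -> nat -> bool) (u : Vtx) : list Vtx :=
  match u with
  | inl j =>
      (match j with O => [] | S j' => [inl j'] end) ++ [inl (S j)] ++
      map (fun i => inr (i, v i)) (filter (fun i => Nat.eqb (h i) j) (seq 1 j))
  | inr (i, x) =>
      map (fun y => inr (i, y)) (filter (adj i x) (seq 0 (n i))) ++
      (if Nat.eqb x (v i) then [inl (h i)] else [])
  end.

Definition is_origin (u : Vtx) : bool :=
  match u with inl O => true | _ => false end.

(** [visits_prob nb t u m] = probability that simple random walk (neighbour lists [nb])
    started at u visits the origin 0 at least m times during the time steps 1,...,t. *)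
Fixpoint visits_prob (nb : Vtx -> list Vtx) (t : nat) (u : Vtx) (m : nat) {struct t} : R :=
  match m with
  | O => 1
  | S m' =>
      match t with
      | O => 0
      | S t' =>
          let l := nb u in
          sumR (map (fun w => / INR (length l) *
                      (if is_origin w then visits_prob nb t' w m'
                       else visits_prob nb t' w (S m'))) l)
      end
  end.

(** P_0(tau_0^(M) < T) for T >= 1: the M-th return to 0 happens at a time <= T-1,
    i.e. at least M visits to 0 during times 1..T-1. *)
Definition return_before (nb : Vtx -> list Vtx) (M T : nat) : R :=
  visits_prob nb (T - 1) (inl O) M.

Definition Rceil (x : R) : Z := (- Int_part (- x))%Z.

From Stdlib Require Import Reals List ZArith Lra Lia Classical.
From mathcomp Require Rstruct.
From mathcomp Require ssreflect ssrfun ssrbool eqtype ssrnat fintype bigop ssralg matrix.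
Import ListNotations.
Open Scope R_scope.

(** The spectral bound makes the walk [P] on [E_i] contract mean-zero functions by [rho] in
    [l^2]: otherwise near-maximisers of the Rayleigh quotient of [P^2] on mean-zero functions,
    together with a determinant dichotomy, produce a mean-zero eigenvector of [P^2] with
    eigenvalue above [rho^2].  Summing [P^t (n_i 1_{v_i} - 1)] then gives an approximate
    Green function [G] on [E_i], with [0 <= G <= 2 n_i / (1 - rho)] and [G - P G] close to
    [n_i 1_{v_i} - 1].  From it one builds a potential [psi >= 1] on [G]: linear from [2] down
    to [3/2] on the segment [[1, h_i]], and [1 + A + B G] on [E_i] with [B] of order [1/(h_i n_i)].
    Every step multiplies the mean of [psi] by at most [1 + 4/(h_i n_i)], even when each
    visit to [0] is rewarded by a factor [1 + 1/(8 h_i)]; hence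
    [P(m visits to 0 before t) <= 2 (1 + 4/(h_i n_i))^t (1 + 1/(8 h_i))^(-m)], which for
    [t = k h_i n_i] and [m = 64 k h_i] is at most [2 e^(4k) 2^(-8k) <= 2 e^(-k)].
    Only [h_i >= 8 / (1 - rho)] is used, so [F] can be taken constant. *)

(** * Finite sums *)

Fixpoint rsum (n : nat) (f : nat -> R) : R :=
  match n with O => 0 | S n => rsum n f + f n end.

Lemma rsum_ext n f g : (forall x, (x < n)%nat -> f x = g x) -> rsum n f = rsum n g.
Proof.
  induction n; intros H; simpl; [reflexivity|].
  rewrite IHn by (intros; apply H; lia). rewrite H by lia. reflexivity.
Qed.

Lemma rsum_plus n f g : rsum n (fun x => f x + g x) = rsum n f + rsum n g.
Proof. induction n; simpl; [ring|rewrite IHn; ring]. Qed.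

Lemma rsum_minus n f g : rsum n (fun x => f x - g x) = rsum n f - rsum n g.
Proof. induction n; simpl; [ring|rewrite IHn; ring]. Qed.

Lemma rsum_scal_l n c f : rsum n (fun x => c * f x) = c * rsum n f.
Proof. induction n; simpl; [ring|rewrite IHn; ring]. Qed.

Lemma rsum_scal_r n c f : rsum n (fun x => f x * c) = rsum n f * c.
Proof. induction n; simpl; [ring|rewrite IHn; ring]. Qed.

Lemma rsum_const n c : rsum n (fun _ => c) = INR n * c.
Proof. induction n; simpl rsum; [simpl; ring|rewrite IHn, S_INR; ring]. Qed.

Lemma rsum_le n f g : (forall x, (x < n)%nat -> f x <= g x) -> rsum n f <= rsum n g.
Proof.
  induction n; intros H; simpl; [lra|].
  apply Rplus_le_compat; [apply IHn; intros; apply H|apply H]; lia.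
Qed.

Lemma rsum_nonneg n f : (forall x, (x < n)%nat -> 0 <= f x) -> 0 <= rsum n f.
Proof.
  intros H. replace 0 with (rsum n (fun _ => 0)) by (rewrite rsum_const; ring).
  apply rsum_le; auto.
Qed.

Lemma rsum_swap n m (F : nat -> nat -> R) :
  rsum n (fun x => rsum m (F x)) = rsum m (fun y => rsum n (fun x => F x y)).
Proof.
  induction n; simpl.
  - rewrite rsum_const. simpl; ring.
  - rewrite IHn, <- rsum_plus. reflexivity.
Qed.

Lemma rsum_delta n v c : (v < n)%nat -> rsum n (fun y => if Nat.eqb y v then c else 0) = c.
Proof.
  induction n; intros H; [lia|]. simpl.
  destruct (Nat.eqb_spec n v).
  - subst. rewrite (rsum_ext _ _ (fun _ => 0)), rsum_const; [ring|].
    intros x Hx. destruct (Nat.eqb_spec x v); [lia|reflexivity].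
  - rewrite IHn by lia. ring.
Qed.

Lemma rsum_term_le n f x : (forall y, (y < n)%nat -> 0 <= f y) -> (x < n)%nat -> f x <= rsum n f.
Proof.
  induction n; intros H Hx; [lia|]. simpl.
  assert (0 <= f n) by (apply H; lia).
  destruct (Nat.eq_dec x n).
  - subst. assert (0 <= rsum n f) by (apply rsum_nonneg; intros; apply H; lia). lra.
  - assert (f x <= rsum n f) by (apply IHn; [intros; apply H|]; lia). lra.
Qed.

Lemma rsum_telescope n (a : nat -> R) : rsum n (fun t => a t - a (S t)) = a 0%nat - a n.
Proof. induction n; simpl; [ring|rewrite IHn; ring]. Qed.

Lemma sumR_app l1 l2 : sumR (l1 ++ l2) = sumR l1 + sumR l2.
Proof. induction l1; simpl; [ring|rewrite IHl1; ring]. Qed.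

Lemma sumR_seq n f : sumR (map f (seq 0 n)) = rsum n f.
Proof.
  induction n; [reflexivity|]. rewrite seq_S, map_app, sumR_app, IHn. simpl. ring.
Qed.

Lemma sumR_scal_l (A : Type) (l : list A) c (f : A -> R) :
  sumR (map (fun w => c * f w) l) = c * sumR (map f l).
Proof. induction l; simpl; [ring|rewrite IHl; ring]. Qed.

Lemma sumR_le (A : Type) (l : list A) (f g : A -> R) :
  (forall w, In w l -> f w <= g w) -> sumR (map f l) <= sumR (map g l).
Proof.
  induction l; simpl; intros H; [lra|].
  apply Rplus_le_compat; [apply H; auto|apply IHl; intros; apply H; auto].
Qed.

Lemma sumR_const (A : Type) (l : list A) (f : A -> R) c :
  (forall w, In w l -> f w = c) -> sumR (map f l) = INR (length l) * c.
Proof.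
  induction l; simpl; intros H; [ring|].
  rewrite IHl, H by auto. destruct (length l); simpl; ring.
Qed.

Lemma sumR_filter (l : list nat) (p : nat -> bool) (g : nat -> R) :
  sumR (map g (filter p l)) = sumR (map (fun x => if p x then g x else 0) l).
Proof. induction l; simpl; [reflexivity|]. destruct (p a); simpl; rewrite IHl; ring. Qed.

Lemma INR_length_filter (l : list nat) (p : nat -> bool) :
  INR (length (filter p l)) = sumR (map (fun x => if p x then 1 else 0) l).
Proof.
  induction l; [reflexivity|]. simpl. rewrite <- IHl.
  destruct (p a); [simpl length; rewrite S_INR|]; ring.
Qed.

Lemma quadratic_nonneg_discr a b c :
  0 <= c -> (forall t, 0 <= a + 2 * b * t + c * t * t) -> b * b <= a * c.
Proof.
  intros Hc H. destruct (Rle_lt_or_eq_dec 0 c Hc) as [Hc'|<-].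
  - specialize (H (- b / c)).
    replace (a + 2 * b * (- b / c) + c * (- b / c) * (- b / c)) with ((a * c - b * b) / c)
      in H by (field; lra).
    apply Rmult_le_compat_r with (r := c) in H; [|lra].
    unfold Rdiv in H. rewrite Rmult_assoc, Rinv_l in H; lra.
  - destruct (Req_dec b 0) as [->|Hb]; [lra|].
    specialize (H (- (a + 1) / (2 * b))).
    replace (a + 2 * b * (- (a + 1) / (2 * b)) + 0 * (- (a + 1) / (2 * b)) * (- (a + 1) / (2 * b)))
      with (-1) in H by (field; lra). lra.
Qed.

Lemma rsum_Cauchy_Schwarz n (f g : nat -> R) :
  rsum n (fun x => f x * g x) * rsum n (fun x => f x * g x) <=
  rsum n (fun x => f x * f x) * rsum n (fun x => g x * g x).
Proof.
  apply quadratic_nonneg_discr.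
  - apply rsum_nonneg; intros x _. apply Rle_0_sqr.
  - intros t.
    replace (rsum n (fun x => f x * f x) + 2 * rsum n (fun x => f x * g x) * t +
             rsum n (fun x => g x * g x) * t * t)
      with (rsum n (fun x => (f x + t * g x) * (f x + t * g x))).
    + apply rsum_nonneg; intros x _. apply Rle_0_sqr.
    + rewrite (rsum_ext _ _ (fun x => f x * f x + (2 * t * (f x * g x) + t * t * (g x * g x))))
        by (intros; ring).
      rewrite !rsum_plus, !rsum_scal_l. ring.
Qed.

Lemma Rdiv_le_iff a b c : 0 < b -> (a / b <= c <-> a <= c * b).
Proof.
  intros Hb. unfold Rdiv. split; intros H.
  - apply Rmult_le_compat_r with (r := b) in H; [|lra].
    rewrite Rmult_assoc, Rinv_l, Rmult_1_r in H; lra.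
  - apply Rmult_le_reg_r with b; auto. rewrite Rmult_assoc, Rinv_l, Rmult_1_r; lra.
Qed.


(** * The walk on a 3-regular graph *)

Definition markov (N : nat) (a : nat -> nat -> bool) (f : nat -> R) (x : nat) : R :=
  rsum N (fun y => trans3 a x y * f y).
Definition sqnorm (N : nat) (f : nat -> R) : R := rsum N (fun x => f x * f x).
Definition inner (N : nat) (f g : nat -> R) : R := rsum N (fun x => f x * g x).

Lemma trans3_nonneg a x y : 0 <= trans3 a x y.
Proof. unfold trans3. destruct (a x y); lra. Qed.

Lemma sqnorm_nonneg N f : 0 <= sqnorm N f.
Proof. apply rsum_nonneg. intros x _. apply Rle_0_sqr. Qed.

Lemma sqnorm_eq0 N f : sqnorm N f = 0 -> forall x, (x < N)%nat -> f x = 0.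
Proof.
  intros H x Hx.
  assert (f x * f x <= 0).
  { rewrite <- H. apply (rsum_term_le N (fun y => f y * f y)); auto.
    intros y _. apply Rle_0_sqr. }
  nra.
Qed.

Lemma sqnorm_pos_or_eq0 N f : 0 < sqnorm N f \/ forall x, (x < N)%nat -> f x = 0.
Proof.
  destruct (Rle_lt_or_eq_dec _ _ (sqnorm_nonneg N f)) as [H|H]; [left; auto|right].
  apply sqnorm_eq0; auto.
Qed.

Lemma sqnorm_zero_on N f : (forall x, (x < N)%nat -> f x = 0) -> sqnorm N f = 0.
Proof.
  intros H. unfold sqnorm. rewrite (rsum_ext _ _ (fun _ => 0)), rsum_const; [ring|].
  intros x Hx. rewrite H; auto; ring.
Qed.

Lemma markov_zero_on N a f x : (forall y, (y < N)%nat -> f y = 0) -> markov N a f x = 0.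
Proof.
  intros H. unfold markov. rewrite (rsum_ext _ _ (fun _ => 0)), rsum_const; [ring|].
  intros y Hy. rewrite H; auto; ring.
Qed.

Lemma sqnorm_plus_scal N f g t :
  sqnorm N (fun x => f x + t * g x) = sqnorm N f + 2 * t * inner N f g + t * t * sqnorm N g.
Proof.
  unfold sqnorm, inner.
  rewrite (rsum_ext _ _ (fun x => f x * f x + (2 * t * (f x * g x) + t * t * (g x * g x))))
    by (intros; ring).
  rewrite !rsum_plus, !rsum_scal_l. ring.
Qed.

Section Markov.
Variables (N : nat) (a : nat -> nat -> bool).
Hypothesis Hreg : simple_3_regular N a.

Lemma trans3_row_sum x : (x < N)%nat -> rsum N (trans3 a x) = 1.
Proof.
  intros Hx. destruct Hreg as [_ [_ H3]].
  rewrite <- sumR_seq.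
  replace (sumR (map (trans3 a x) (seq 0 N)))
    with (/ 3 * INR (length (filter (a x) (seq 0 N)))).
  - rewrite H3 by auto. simpl. field.
  - rewrite INR_length_filter, <- sumR_scal_l. f_equal. apply map_ext. intros y.
    unfold trans3. destruct (a x y); ring.
Qed.

Lemma trans3_sym x y : (x < N)%nat -> (y < N)%nat -> trans3 a x y = trans3 a y x.
Proof. intros Hx Hy. destruct Hreg as [Hs _]. unfold trans3. rewrite Hs by auto. reflexivity. Qed.

Lemma trans3_col_sum y : (y < N)%nat -> rsum N (fun x => trans3 a x y) = 1.
Proof.
  intros Hy. rewrite <- (trans3_row_sum y Hy). apply rsum_ext. intros. apply trans3_sym; auto.
Qed.

Lemma markov_ext f g x : (forall y, (y < N)%nat -> f y = g y) -> markov N a f x = markov N a g x.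
Proof. intros H. apply rsum_ext. intros y Hy. rewrite H; auto. Qed.

Lemma markov_plus_scal f g c x :
  markov N a (fun y => f y + c * g y) x = markov N a f x + c * markov N a g x.
Proof. unfold markov. rewrite <- rsum_scal_l, <- rsum_plus. apply rsum_ext. intros; ring. Qed.

Lemma markov_const c x : (x < N)%nat -> markov N a (fun _ => c) x = c.
Proof. intros Hx. unfold markov. rewrite rsum_scal_r, trans3_row_sum by auto. ring. Qed.

Lemma markov_mass f : rsum N (markov N a f) = rsum N f.
Proof.
  unfold markov. rewrite rsum_swap. apply rsum_ext. intros y Hy.
  rewrite rsum_scal_r, trans3_col_sum by auto. ring.
Qed.

Lemma markov_selfadjoint f g : inner N g (markov N a f) = inner N (markov N a g) f.
Proof.
  unfold inner, markov.
  transitivity (rsum N (fun x => rsum N (fun y => g x * trans3 a x y * f y))).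
  { apply rsum_ext. intros x Hx. rewrite <- rsum_scal_l. apply rsum_ext. intros; ring. }
  rewrite rsum_swap. apply rsum_ext. intros y Hy. rewrite <- rsum_scal_r.
  apply rsum_ext. intros x Hx. rewrite trans3_sym by auto. ring.
Qed.

(* Jensen: [(P f x)^2 <= P (f^2) x], then the columns of [P] sum to [1]. *)
Lemma markov_sqnorm_le f : sqnorm N (markov N a f) <= sqnorm N f.
Proof.
  apply Rle_trans with (rsum N (fun x => rsum N (fun y => trans3 a x y * (f y * f y)))).
  - apply rsum_le. intros x Hx. set (m := markov N a f x).
    assert (0 <= rsum N (fun y => trans3 a x y * ((f y - m) * (f y - m)))).
    { apply rsum_nonneg. intros y _. apply Rmult_le_pos; [apply trans3_nonneg|apply Rle_0_sqr]. }
    rewrite (rsum_ext _ _ (fun y => trans3 a x y * (f y * f y) +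
               (-2 * m * (trans3 a x y * f y) + m * m * trans3 a x y))) in H by (intros; ring).
    rewrite !rsum_plus, !rsum_scal_l, trans3_row_sum in H by auto.
    fold (markov N a f x) in H. fold m in H. lra.
  - rewrite rsum_swap. apply rsum_le. intros y Hy.
    rewrite rsum_scal_r, trans3_col_sum by auto. lra.
Qed.

End Markov.

(** * From the spectral bound to a contraction on mean-zero functions *)

Module MatrixDichotomy.
Import ssreflect ssrfun ssrbool eqtype ssrnat fintype bigop ssralg matrix Rstruct.
Import GRing.Theory.
Local Open Scope ring_scope.

Lemma big_ord_rsum n (f : nat -> R) : \sum_(i < n) f i = rsum n f.
Proof. by elim: n => [|n IH]; rewrite ?big_ord0 // big_ord_recr /= IH. Qed.

Definition entry {N} (M : 'M[R]_N) (x y : nat) : R :=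
  if insub x is Some i then if insub y is Some j then M i j else 0 else 0.

Lemma entryE {N} (M : 'M[R]_N) (i j : 'I_N) : entry M i j = M i j.
Proof. by rewrite /entry !valK. Qed.

(* Stated with [R0] and [R1]: in [ring_scope] the numerals would be MathComp's. *)
Lemma singular_or_left_invertible (N : nat) (L : nat -> nat -> R) :
  (exists g : nat -> R, (exists x, (x < N)%coq_nat /\ g x <> R0) /\
     forall x, (x < N)%coq_nat -> rsum N (fun y => L x y * g y) = R0)
  \/ (exists M : nat -> nat -> R, forall x z, (x < N)%coq_nat -> (z < N)%coq_nat ->
       rsum N (fun y => M x y * L y z) = if Nat.eqb x z then R1 else R0).
Proof.
pose A := \matrix_(i < N, j < N) L i j.
have [/eqP detA0 | detA_neq0] := boolP (\det A == 0).
- left; have /det0P [u u_neq0 uA] : \det A^T == 0 by rewrite det_tr detA0.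
  exists (fun y => if insub y is Some j then u ord0 j else 0); split.
  + case: (pickP (fun j => u ord0 j != 0)) => [j uj|u0].
      by exists j; split; [apply/ltP | rewrite valK; apply/eqP].
    by case/negP: u_neq0; apply/eqP/matrixP => i j; rewrite ord1 mxE; move/negbFE/eqP: (u0 j).
  + move=> x /ltP x_lt; rewrite -big_ord_rsum.
    transitivity ((u *m A^T) ord0 (Ordinal x_lt)); last by rewrite uA mxE.
    by rewrite mxE; apply: eq_bigr => j _; rewrite valK !mxE mulrC.
- right; have unitA : A \in unitmx by rewrite unitmxE unitfE.
  exists (entry (invmx A)) => x z /ltP x_lt /ltP z_lt; rewrite -big_ord_rsum.
  have := congr1 (fun M : 'M[R]_N => M (Ordinal x_lt) (Ordinal z_lt)) (mulVmx unitA).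
  rewrite !mxE => invA_A.
  transitivity (\sum_(j < N) invmx A (Ordinal x_lt) j * A j (Ordinal z_lt)).
    by apply: eq_bigr => j _; rewrite -(entryE (invmx A) (Ordinal x_lt)) !mxE.
  rewrite invA_A; case: (Nat.eqb_spec x z) => [xz | xz].
    by subst z; rewrite (bool_irrelevance z_lt x_lt) eqxx.
  by have -> : (Ordinal x_lt == Ordinal z_lt) = false by apply/eqP => - [].
Qed.
End MatrixDichotomy.

Section SpectralGap.
Variables (N : nat) (a : nat -> nat -> bool) (rho : R).
Hypothesis Hreg : simple_3_regular N a.
Hypothesis Hspec : spectral_bound rho N a.

Let P := markov N a.

(* [P g + s g] or [g] is an eigenvector of [P] for [s] or [-s], with [s = sqrt mu]. *)
Lemma markov2_eigenvalue_le mu g :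
  (exists x, (x < N)%nat /\ g x <> 0) -> rsum N g = 0 ->
  (forall x, (x < N)%nat -> P (P g) x = mu * g x) -> mu <= rho ^ 2.
Proof.
  intros Hg Hsum Heig. apply Rnot_lt_le. intros Hmu.
  assert (Hmu0 : 0 < mu) by (pose proof (pow2_ge_0 rho); lra).
  set (s := sqrt mu).
  assert (Hss : s * s = mu) by (apply sqrt_sqrt; lra).
  assert (Hs0 : 0 < s) by (apply sqrt_lt_R0; lra).
  assert (Hsr : rho < s).
  { destruct (Rlt_le_dec rho 0); [lra|].
    rewrite <- (sqrt_pow2 rho) by lra. apply sqrt_lt_1_alt. split; [apply pow2_ge_0|auto]. }
  set (hv x := P g x + s * g x).
  destruct (classic (exists x, (x < N)%nat /\ hv x <> 0)) as [Hhv|Hhv].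
  - assert (Hev : forall x, (x < N)%nat ->
              sumR (map (fun y => trans3 a x y * hv y) (seq 0 N)) = s * hv x).
    { intros x Hx. rewrite sumR_seq. change (P hv x = s * hv x). unfold hv, P.
      rewrite markov_plus_scal. fold P. rewrite Heig, <- Hss by auto. ring. }
    destruct (Hspec s hv (conj Hhv Hev)) as [Hone Hother].
    destruct (Req_dec s 1) as [Hs1|Hs1].
    + destruct Hhv as [x1 [Hx1 Hh1]].
      assert (Hmass : rsum N hv = 0).
      { unfold hv, P. rewrite rsum_plus, rsum_scal_l, markov_mass, Hsum by auto. ring. }
      rewrite (rsum_ext _ _ (fun _ => hv x1)), rsum_const in Hmass by (intros; apply Hone; auto).
      apply Rmult_integral in Hmass. destruct Hmass; [|contradiction].
      assert (INR N > 0) by (apply lt_0_INR; lia). lra.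
    + pose proof (Hother Hs1). rewrite Rabs_right in H by lra. lra.
  - assert (Hev : forall x, (x < N)%nat ->
              sumR (map (fun y => trans3 a x y * g y) (seq 0 N)) = - s * g x).
    { intros x Hx. rewrite sumR_seq. change (P g x = - s * g x).
      assert (hv x = 0) by (apply NNPP; intros Hc; apply Hhv; exists x; auto).
      unfold hv in H. lra. }
    destruct (Hspec (- s) g (conj Hg Hev)) as [_ Hother].
    assert (- s <> 1) by lra.
    pose proof (Hother H). rewrite Rabs_left in H0 by lra. lra.
Qed.

(* The matrix of [f |-> mu f - P (P f) + (2/N) (sum f)] is invertible: a kernel vector would be
   a mean-zero eigenvector of [P^2] for [mu]. *)
Lemma markov2_shift_coercive mu : rho ^ 2 < mu ->
  exists K, 0 <= K /\ forall f, rsum N f = 0 ->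
    sqnorm N f <= K * sqnorm N (fun x => mu * f x - P (P f) x).
Proof.
  intros Hmu.
  destruct (Nat.eq_dec N 0) as [HN0|HN0].
  { exists 0. split; [lra|]. intros f _. unfold sqnorm. rewrite HN0. simpl. lra. }
  assert (HNR : 0 < INR N) by (apply lt_0_INR; lia).
  set (Lm x y := (if Nat.eqb x y then mu else 0)
                 - rsum N (fun z => trans3 a x z * trans3 a z y) + 2 / INR N).
  assert (HQ : forall g x,
            P (P g) x = rsum N (fun y => rsum N (fun z => trans3 a x z * trans3 a z y) * g y)).
  { intros g x. unfold P, markov.
    transitivity (rsum N (fun z => rsum N (fun y => trans3 a x z * (trans3 a z y * g y)))).
    { apply rsum_ext. intros z _. rewrite rsum_scal_l. reflexivity. }
    rewrite rsum_swap. apply rsum_ext. intros y _. rewrite <- rsum_scal_r.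
    apply rsum_ext. intros; ring. }
  assert (HL : forall g x, (x < N)%nat ->
            rsum N (fun y => Lm x y * g y) = mu * g x - P (P g) x + 2 / INR N * rsum N g).
  { intros g x Hx. unfold Lm.
    rewrite (rsum_ext _ _ (fun y => ((if Nat.eqb y x then mu * g x else 0)
               - rsum N (fun z => trans3 a x z * trans3 a z y) * g y) + 2 / INR N * g y)).
    2: { intros y _. destruct (Nat.eqb_spec x y), (Nat.eqb_spec y x); subst; try lia; ring. }
    rewrite rsum_plus, rsum_minus, rsum_delta, rsum_scal_l, HQ by auto. ring. }
  destruct (MatrixDichotomy.singular_or_left_invertible N Lm) as [[g [Hg Hker]] | [M HM]].
  - exfalso.
    assert (Hker' : forall x, (x < N)%nat -> mu * g x - P (P g) x + 2 / INR N * rsum N g = 0).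
    { intros x Hx. rewrite <- HL by auto. apply Hker; auto. }
    assert (Hsum : rsum N g = 0).
    { assert (E : rsum N (fun x => mu * g x - P (P g) x + 2 / INR N * rsum N g) = 0).
      { rewrite (rsum_ext _ _ (fun _ => 0)), rsum_const; [ring|]. intros; apply Hker'; auto. }
      unfold P in E.
      rewrite rsum_plus, rsum_minus, rsum_scal_l, !markov_mass, rsum_const in E by auto.
      replace (INR N * (2 / INR N * rsum N g)) with (2 * rsum N g) in E by (field; lra).
      pose proof (pow2_ge_0 rho). nra. }
    pose proof (markov2_eigenvalue_le mu g Hg Hsum).
    assert (mu <= rho ^ 2); [|lra].
    apply H. intros x Hx. pose proof (Hker' x Hx). rewrite Hsum in H0. lra.
  - exists (rsum N (fun x => sqnorm N (M x))).
    split; [apply rsum_nonneg; intros; apply sqnorm_nonneg|].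
    intros f Hf. rewrite <- rsum_scal_r. apply rsum_le. intros x Hx.
    replace (f x) with (rsum N (fun y => M x y * (mu * f y - P (P f) y))).
    + apply rsum_Cauchy_Schwarz.
    + transitivity (rsum N (fun y => rsum N (fun z => M x y * Lm y z * f z))).
      { apply rsum_ext. intros y Hy.
        replace (mu * f y - P (P f) y) with (mu * f y - P (P f) y + 2 / INR N * rsum N f)
          by (rewrite Hf; ring).
        rewrite <- HL, <- rsum_scal_l by auto.
        apply rsum_ext. intros; ring. }
      rewrite rsum_swap, <- (rsum_delta N x (f x)) by auto. apply rsum_ext. intros z Hz.
      rewrite rsum_scal_r, HM by auto.
      destruct (Nat.eqb_spec x z), (Nat.eqb_spec z x); subst; try lia;       ring.
Qed.

Lemma rayleigh_sup f0 : rsum N f0 = 0 -> 0 < sqnorm N f0 ->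
  exists mu, sqnorm N (P f0) <= mu * sqnorm N f0 /\
    (forall g, rsum N g = 0 -> sqnorm N (P g) <= mu * sqnorm N g) /\
    (forall eps, 0 < eps -> exists f, rsum N f = 0 /\ 0 < sqnorm N f /\
                   (mu - eps) * sqnorm N f <= sqnorm N (P f)).
Proof.
  intros Hf0 Hn0.
  set (S r := exists f, rsum N f = 0 /\ 0 < sqnorm N f /\ r = sqnorm N (P f) / sqnorm N f).
  assert (HSb : bound S).
  { exists 1. intros r [f [_ [Hp ->]]]. apply Rdiv_le_iff; auto.
    pose proof (markov_sqnorm_le N a Hreg f). unfold P. lra. }
  destruct (completeness S HSb (ex_intro _ _ (ex_intro _ f0 (conj Hf0 (conj Hn0 eq_refl)))))
    as [mu [Hub Hleast]].
  assert (Hup : forall g, rsum N g = 0 -> sqnorm N (P g) <= mu * sqnorm N g).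
  { intros g Hg. destruct (sqnorm_pos_or_eq0 N g) as [Hp|Hz].
    - apply Rdiv_le_iff; auto. apply Hub. exists g. auto.
    - rewrite (sqnorm_zero_on N g Hz), (sqnorm_zero_on N (P g)); [lra|].
      intros x _. apply markov_zero_on, Hz. }
  exists mu. split; [|split; [exact Hup|]].
  - apply Hup, Hf0.
  - intros eps Heps. apply NNPP. intros Hno.
    assert (is_upper_bound S (mu - eps)).
    { intros r [f [Hf [Hp ->]]]. apply Rdiv_le_iff; auto.
      apply Rnot_lt_le. intros Hlt. apply Hno. exists f. repeat split; auto. lra. }
    pose proof (Hleast _ H). lra.
Qed.

(* An almost maximiser [f] of the Rayleigh quotient of [P^2] is an almost eigenvector:
   the quadratic form [mu |g|^2 - |P g|^2] is nonnegative on mean-zero functions, so the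
   Cauchy-Schwarz inequality for it bounds its value at [(f, mu f - P (P f))]. *)
Lemma near_maximiser_residual mu eps f : 0 <= mu -> 0 < eps ->
  (forall g, rsum N g = 0 -> sqnorm N (P g) <= mu * sqnorm N g) ->
  rsum N f = 0 -> (mu - eps) * sqnorm N f <= sqnorm N (P f) ->
  sqnorm N (fun x => mu * f x - P (P f) x) <= eps * mu * sqnorm N f.
Proof.
  intros Hmu Heps Hup Hf Happ.
  set (g x := mu * f x - P (P f) x). set (X := sqnorm N g).
  assert (Hg : rsum N g = 0).
  { unfold g, P. rewrite rsum_minus, rsum_scal_l, !markov_mass, Hf by auto. ring. }
  assert (HX0 : 0 <= X) by apply sqnorm_nonneg.
  assert (Hform : forall t, 0 <= (mu * sqnorm N f - sqnorm N (P f))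
                     + 2 * (mu * inner N f g - inner N (P f) (P g)) * t
                     + (mu * sqnorm N g - sqnorm N (P g)) * t * t).
  { intros t.
    assert (Hs : rsum N (fun x => f x + t * g x) = 0)
      by (rewrite rsum_plus, rsum_scal_l, Hf, Hg; ring).
    pose proof (Hup _ Hs) as Hu.
    assert (EP : sqnorm N (P (fun x => f x + t * g x)) = sqnorm N (fun x => P f x + t * P g x)).
    { apply rsum_ext. intros x _. unfold P. rewrite markov_plus_scal. reflexivity. }
    rewrite EP, !sqnorm_plus_scal in Hu. nra. }
  assert (Hcross : mu * inner N f g - inner N (P f) (P g) = X).
  { unfold P. rewrite markov_selfadjoint by auto. fold P.
    unfold X, sqnorm, inner. rewrite <- rsum_scal_l, <- rsum_minus. apply rsum_ext.
    intros x _. unfold g, P. ring. }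
  assert (Hc : 0 <= mu * sqnorm N g - sqnorm N (P g)) by (pose proof (Hup g Hg); lra).
  pose proof (quadratic_nonneg_discr _ _ _ Hc Hform) as Hd. rewrite Hcross in Hd.
  assert (Ha0 : 0 <= mu * sqnorm N f - sqnorm N (P f)) by (pose proof (Hup f Hf); lra).
  assert (Hc' : mu * sqnorm N g - sqnorm N (P g) <= mu * X)
    by (pose proof (sqnorm_nonneg N (P g)); unfold X; lra).
  assert (X * X <= (eps * sqnorm N f) * (mu * X)).
  { eapply Rle_trans; [exact Hd|]. apply Rmult_le_compat; lra. }
  destruct (Rle_lt_or_eq_dec _ _ HX0) as [HXp|<-].
  - apply Rmult_le_reg_r with X; auto. nra.
  - pose proof (sqnorm_nonneg N f). apply Rmult_le_pos; [apply Rmult_le_pos|]; lra.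
Qed.

Lemma markov_contraction f : rsum N f = 0 -> sqnorm N (P f) <= rho ^ 2 * sqnorm N f.
Proof.
  intros Hf. apply Rnot_lt_le. intros Hlt.
  assert (Hn : 0 < sqnorm N f).
  { destruct (sqnorm_pos_or_eq0 N f) as [|Hz]; auto.
    rewrite (sqnorm_zero_on N f Hz), (sqnorm_zero_on N (P f)) in Hlt; [lra|].
    intros x _. apply markov_zero_on, Hz. }
  destruct (rayleigh_sup f Hf Hn) as [mu [Hmu_f [Hup Happrox]]].
  assert (Hmu : rho ^ 2 < mu).
  { apply Rmult_lt_reg_r with (sqnorm N f); lra. }
  assert (Hmu0 : 0 <= mu) by (pose proof (pow2_ge_0 rho); lra).
  destruct (markov2_shift_coercive mu Hmu) as [K [HK Hcoer]].
  set (eps := / (2 * (K * mu + 1))).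
  assert (HKmu : 0 <= K * mu) by (apply Rmult_le_pos; lra).
  assert (Heps : 0 < eps) by (apply Rinv_0_lt_compat; lra).
  destruct (Happrox eps Heps) as [g [Hg [Hgn Hgapp]]].
  pose proof (near_maximiser_residual mu eps g Hmu0 Heps Hup Hg Hgapp) as Hres.
  assert (sqnorm N g <= K * (eps * mu * sqnorm N g)).
  { eapply Rle_trans; [apply Hcoer, Hg|]. apply Rmult_le_compat_l; auto. }
  assert (K * (eps * mu) <= 1 / 2).
  { replace (K * (eps * mu)) with (K * mu / (2 * (K * mu + 1))) by (unfold eps; field; lra).
    apply Rdiv_le_iff; lra. }
  nra.
Qed.

End SpectralGap.

(** * An approximate Green function of the expander *)

Fixpoint markov_pow (N : nat) (a : nat -> nat -> bool) (t : nat) (f : nat -> R) : nat -> R :=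
  match t with O => f | S t => markov N a (markov_pow N a t f) end.

Lemma geom_sum_mul (r : R) T : rsum T (fun t => r ^ t) * (1 - r) = 1 - r ^ T.
Proof. induction T; simpl; [ring|]. rewrite Rmult_plus_distr_r, IHT. ring. Qed.

Section GreenFunction.
Variables (N : nat) (a : nat -> nat -> bool) (rho : R) (v : nat).
Hypothesis Hreg : simple_3_regular N a.
Hypothesis Hrho0 : 0 <= rho.
Hypothesis Hrho1 : rho < 1.
Hypothesis Hcontr : forall f, rsum N f = 0 -> sqnorm N (markov N a f) <= rho ^ 2 * sqnorm N f.
Hypothesis Hv : (v < N)%nat.

(* The source term [N 1_v - 1]: it has mean zero, so [P^t] contracts it geometrically. *)
Let e x := if Nat.eqb x v then INR N - 1 else -1.

Lemma source_mean_zero : rsum N e = 0.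
Proof.
  unfold e. rewrite (rsum_ext _ _ (fun x => (if Nat.eqb x v then INR N else 0) - 1)).
  - rewrite rsum_minus, rsum_delta, rsum_const by auto. ring.
  - intros x _. destruct (Nat.eqb x v); ring.
Qed.

Lemma source_sqnorm_le : sqnorm N e <= INR N * INR N.
Proof.
  unfold sqnorm, e.
  rewrite (rsum_ext _ _ (fun x => (if Nat.eqb x v then (INR N - 1) * (INR N - 1) - 1 else 0) + 1)).
  - rewrite rsum_plus, rsum_delta, rsum_const by auto.
    assert (1 <= INR N) by (apply (le_INR 1); lia). nra.
  - intros x _. destruct (Nat.eqb x v); ring.
Qed.

Lemma markov_pow_source_mean_zero t : rsum N (markov_pow N a t e) = 0.
Proof. induction t; simpl; [apply source_mean_zero|]. rewrite markov_mass; auto. Qed.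

Lemma markov_pow_source_sqnorm t : sqnorm N (markov_pow N a t e) <= rho ^ (2 * t) * (INR N * INR N).
Proof.
  induction t; simpl markov_pow.
  - rewrite Rmult_1_l. apply source_sqnorm_le.
  - eapply Rle_trans; [apply Hcontr, markov_pow_source_mean_zero|].
    replace (2 * S t)%nat with (2 + 2 * t)%nat by lia. rewrite pow_add, Rmult_assoc.
    apply Rmult_le_compat_l; auto. apply pow_le; lra.
Qed.

Lemma markov_pow_source_bound t x : (x < N)%nat -> Rabs (markov_pow N a t e x) <= rho ^ t * INR N.
Proof.
  intros Hx.
  assert (H : Rsqr (markov_pow N a t e x) <= Rsqr (rho ^ t * INR N)).
  { unfold Rsqr. apply Rle_trans with (sqnorm N (markov_pow N a t e)).
    - apply (rsum_term_le N (fun y => markov_pow N a t e y * markov_pow N a t e y)); auto.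
      intros y _. apply Rle_0_sqr.
    - eapply Rle_trans; [apply markov_pow_source_sqnorm|].
      replace (2 * t)%nat with (t + t)%nat by lia. rewrite pow_add. right; ring. }
  apply Rsqr_le_abs_0 in H. rewrite (Rabs_right (rho ^ t * INR N)) in H; auto.
  apply Rle_ge, Rmult_le_pos; [apply pow_le; lra|apply pos_INR].
Qed.

Let green T x := rsum T (fun t => markov_pow N a t e x).

Lemma green_harmonic_defect T x : green T x - markov N a (green T) x = e x - markov_pow N a T e x.
Proof.
  assert (E : markov N a (green T) x = rsum T (fun t => markov_pow N a (S t) e x)).
  { unfold green, markov. simpl markov_pow. unfold markov.
    transitivity (rsum N (fun y => rsum T (fun t => trans3 a x y * markov_pow N a t e y))).
    { apply rsum_ext. intros. rewrite rsum_scal_l. reflexivity. }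
    apply rsum_swap. }
  rewrite E. unfold green. rewrite <- rsum_minus.
  apply (rsum_telescope T (fun t => markov_pow N a t e x)).
Qed.

Lemma green_bound T x : (x < N)%nat -> Rabs (green T x) <= INR N / (1 - rho).
Proof.
  intros Hx. apply Rle_trans with (rsum T (fun t => rho ^ t * INR N)).
  - unfold green. induction T; simpl.
    { rewrite Rabs_R0. lra. }
    eapply Rle_trans; [apply Rabs_triang|]. apply Rplus_le_compat; auto.
    apply markov_pow_source_bound; auto.
  - rewrite rsum_scal_r. pose proof (geom_sum_mul rho T).
    assert (0 <= rho ^ T) by (apply pow_le; lra).
    assert (rsum T (fun t => rho ^ t) <= / (1 - rho)).
    { apply Rmult_le_reg_r with (1 - rho); [lra|]. rewrite H, Rinv_l; lra. }
    unfold Rdiv. rewrite Rmult_comm. apply Rmult_le_compat_l; [apply pos_INR|auto].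
Qed.

Lemma green_exists : exists G : nat -> R,
  (forall x, (x < N)%nat -> 0 <= G x <= 2 * INR N / (1 - rho)) /\
  (forall x, (x < N)%nat -> x <> v -> - (3 / 2) <= G x - markov N a G x) /\
  INR N - 3 / 2 <= G v - markov N a G v.
Proof.
  assert (HN : 0 < INR N) by (apply lt_0_INR; lia).
  destruct (pow_lt_1_zero rho) with (y := / (2 * INR N)) as [T HT].
  { rewrite Rabs_right; lra. }
  { apply Rinv_0_lt_compat; lra. }
  specialize (HT T (le_n _)). rewrite Rabs_right in HT by (apply Rle_ge, pow_le; lra).
  assert (HTN : rho ^ T * INR N < 1 / 2).
  { apply Rmult_lt_compat_r with (r := INR N) in HT; auto.
    replace (/ (2 * INR N) * INR N) with (1 / 2) in HT by (field; lra). lra. }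
  set (c := INR N / (1 - rho)).
  assert (Hc : 0 <= c) by (apply Rmult_le_pos; [lra|apply Rlt_le, Rinv_0_lt_compat; lra]).
  exists (fun x => green T x + c).
  assert (Hshift : forall x, (x < N)%nat ->
            markov N a (fun y => green T y + c) x = markov N a (green T) x + c).
  { intros x Hx. rewrite (markov_ext N a _ (fun y => green T y + c * 1)) by (intros; ring).
    rewrite markov_plus_scal, markov_const by auto. ring. }
  assert (Hdef : forall x, (x < N)%nat -> Rabs (green T x - markov N a (green T) x - e x) < 1 / 2).
  { intros x Hx. rewrite green_harmonic_defect.
    replace (e x - markov_pow N a T e x - e x) with (- markov_pow N a T e x) by ring.
    rewrite Rabs_Ropp. eapply Rle_lt_trans; [apply markov_pow_source_bound; auto|]. auto. }
  split; [|split].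
  - intros x Hx. pose proof (green_bound T x Hx). fold c in H.
    pose proof (Rle_abs (green T x)). pose proof (Rle_abs (- green T x)).
    rewrite Rabs_Ropp in H1.
    replace (2 * INR N / (1 - rho)) with (2 * c) by (unfold c; field; lra). lra.
  - intros x Hx Hxv. rewrite Hshift by auto. pose proof (Hdef x Hx). unfold e in H.
    destruct (Nat.eqb_spec x v); [contradiction|]. apply Rabs_def2 in H. lra.
  - rewrite Hshift by auto. pose proof (Hdef v Hv). unfold e in H. rewrite Nat.eqb_refl in H.
    apply Rabs_def2 in H. lra.
Qed.

End GreenFunction.

(** * A potential-function bound for the number of returns *)

Definition mean_over (l : list Vtx) (g : Vtx -> R) : R :=
  sumR (map (fun w => / INR (length l) * g w) l).

Lemma mean_over_le (l : list Vtx) (g : Vtx -> R) c :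
  0 <= c -> sumR (map g l) <= INR (length l) * c -> mean_over l g <= c.
Proof.
  intros Hc H. unfold mean_over. rewrite sumR_scal_l. destruct l as [|w l].
  - simpl. rewrite Rinv_0. lra.
  - assert (HL : 0 < INR (length (w :: l))) by (apply lt_0_INR; simpl; lia).
    apply Rmult_le_reg_l with (INR (length (w :: l))); auto.
    rewrite <- Rmult_assoc, Rinv_r, Rmult_1_l by lra. auto.
Qed.

(* If [potential], with visits to the origin weighted by [a], grows by at most a factor [E]
   per step on average, then [E^{-t} a^m potential(X_t)] is a supermartingale, so [m] visits
   within [t] steps have probability at most [E^t a^{-m} potential(x)]. *)
Lemma visits_prob_le_potential (nb : Vtx -> list Vtx) (valid : Vtx -> Prop)
    (potential : Vtx -> R) (E a : R) :
  1 <= E -> 1 <= a ->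
  (forall x, valid x -> 1 <= potential x) ->
  (forall x w, valid x -> In w (nb x) -> valid w) ->
  (forall x, valid x ->
     mean_over (nb x) (fun w => (if is_origin w then a else 1) * potential w) <= E * potential x) ->
  forall t x m, valid x -> visits_prob nb t x m <= E ^ t * (/ a) ^ m * potential x.
Proof.
  intros HE Ha Hpot Hvalid Hdrift.
  assert (HEt : forall t, 1 <= E ^ t) by (intros; apply pow_R1_Rle; auto).
  assert (Hia : 0 < / a) by (apply Rinv_0_lt_compat; lra).
  assert (Hiam : forall m, 0 < (/ a) ^ m) by (intros; apply pow_lt; auto).
  induction t; intros x m Hx; destruct m; pose proof (Hpot x Hx).
  - simpl. lra.
  - pose proof (Hiam (S m)). simpl in *. nra.
  - pose proof (HEt (S t)). simpl in *. nra.
  - simpl visits_prob. set (l := nb x).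
    apply Rle_trans with (sumR (map (fun w => (E ^ t * (/ a) ^ (S m)) *
      (/ INR (length l) * ((if is_origin w then a else 1) * potential w))) l)).
    + apply sumR_le. intros w Hw.
      assert (Hw' : valid w) by (apply (Hvalid x); auto).
      assert (Hl : 0 <= / INR (length l)).
      { destruct l; [contradiction|]. apply Rlt_le, Rinv_0_lt_compat, lt_0_INR. simpl; lia. }
      destruct (is_origin w).
      * pose proof (IHt w m Hw').
        replace (E ^ t * (/ a) ^ S m * (/ INR (length l) * (a * potential w)))
          with (/ INR (length l) * (E ^ t * (/ a) ^ m * potential w) * (/ a * a)) by (simpl; ring).
        rewrite Rinv_l, Rmult_1_r by lra. apply Rmult_le_compat_l; auto.
      * pose proof (IHt w (S m) Hw').
        replace (E ^ t * (/ a) ^ S m * (/ INR (length l) * (1 * potential w)))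
          with (/ INR (length l) * (E ^ t * (/ a) ^ S m * potential w)) by ring.
        apply Rmult_le_compat_l; auto.
    + rewrite sumR_scal_l.
      replace (E ^ S t * (/ a) ^ S m * potential x)
        with (E ^ t * (/ a) ^ S m * (E * potential x)) by (simpl; ring).
      apply Rmult_le_compat_l; [|exact (Hdrift x Hx)].
      apply Rmult_le_pos; [pose proof (HEt t)|apply Rlt_le]; auto; lra.
Qed.

Lemma is_origin_inl_pos k : (1 <= k)%nat -> is_origin (inl k) = false.
Proof. intros H. destruct k; [lia|reflexivity]. Qed.

Section StrictlyIncreasing.
Variable h : nat -> nat.
Hypothesis Hhinc : forall i, (h i < h (S i))%nat.

Lemma incr_lt i1 i2 : (i1 < i2)%nat -> (h i1 < h i2)%nat.
Proof.
  intros H. induction H.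
  - apply Hhinc.
  - pose proof (Hhinc m). lia.
Qed.

Lemma incr_inj i1 i2 : h i1 = h i2 -> i1 = i2.
Proof.
  intros E. destruct (Nat.lt_trichotomy i1 i2) as [H|[H|H]]; auto.
  - pose proof (incr_lt _ _ H). lia.
  - pose proof (incr_lt _ _ H). lia.
Qed.

Lemma incr_gt_id i : (0 < h 0)%nat -> (i < h i)%nat.
Proof. intros Hh0. induction i; auto. pose proof (Hhinc i). lia. Qed.
End StrictlyIncreasing.

Section Potential.
Variables (h n v : nat -> nat) (adj : nat -> nat -> nat -> bool).
Hypothesis Hh0 : (0 < h 0)%nat.
Hypothesis Hhinc : forall i, (h i < h (S i))%nat.
Hypothesis Hreg : forall i, (1 <= i)%nat -> simple_3_regular (n i) (adj i).
Hypothesis Hv : forall i, (1 <= i)%nat -> (v i < n i)%nat.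
Variable i : nat.
Hypothesis Hi : (1 <= i)%nat.
Hypothesis Hh4 : (4 <= h i)%nat.
Hypothesis Hn3 : (3 <= n i)%nat.
Variable G : nat -> R.
Hypothesis HG_nonneg : forall y, (y < n i)%nat -> 0 <= G y.
Hypothesis HG_defect : forall y, (y < n i)%nat -> y <> v i ->
  - (3 / 2) <= G y - markov (n i) (adj i) G y.
Hypothesis HG_defect_v : INR (n i) - 3 / 2 <= G (v i) - markov (n i) (adj i) G (v i).
Hypothesis HG_v_small : 4 / (INR (h i) * INR (n i)) * G (v i) <= 1.

(* The small term [B G] pays for the walk inside
   [E_i] (where [G - P G >= -3/2]) with the growth factor [1 + lam], while at [v_i] the large
   defect [n_i - 3/2] of [G] lets the potential rise from [A + B G(v_i) = w0 < 1/2] to [1/2],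
   its value at the junction [h_i] of the line. *)
Let hr := INR (h i).
Let nr := INR (n i).
Let lam := 4 / (hr * nr).
Let w0 := hr / (2 * (hr + 2)).
Let A := w0 / (1 + lam * G (v i) / 2).
Let B := lam * A / 2.
Let trap_potential y := A + B * G y.
Let slope := 1 / (2 * (hr - 1)).
Let line_potential j := if (j <=? h i)%nat then 1 - INR (j - 1) * slope else 1 / 2.
Let potential (x : Vtx) : R :=
  match x with
  | inl j => 1 + line_potential j
  | inr (i', y) => if Nat.eqb i' i then 1 + trap_potential y else 1 + line_potential (h i')
  end.
Let valid (x : Vtx) : Prop :=
  match x with inl _ => True | inr (i', y) => (1 <= i')%nat /\ (y < n i')%nat end.
Let weight := 1 + 1 / (8 * hr).
Let growth := 1 + lam.
Let weighted (w : Vtx) := (if is_origin w then weight else 1) * potential w.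
Let drift_ok x := mean_over (nbrs h n v adj x) weighted <= growth * potential x.

Lemma hr_ge4 : 4 <= hr.
Proof. unfold hr. assert (H : INR 4 <= INR (h i)) by (apply le_INR; auto). simpl in H. lra. Qed.
Lemma nr_ge3 : 3 <= nr.
Proof. unfold nr. assert (H : INR 3 <= INR (n i)) by (apply le_INR; auto). simpl in H. lra. Qed.
Lemma lam_pos : 0 < lam.
Proof. pose proof hr_ge4; pose proof nr_ge3. unfold lam. apply Rdiv_lt_0_compat; [lra|nra]. Qed.
Lemma G_v_nonneg : 0 <= G (v i).
Proof. apply HG_nonneg, Hv, Hi. Qed.
Lemma A_pos : 0 < A.
Proof.
  pose proof hr_ge4; pose proof lam_pos; pose proof G_v_nonneg. unfold A, w0.
  apply Rdiv_lt_0_compat; [apply Rdiv_lt_0_compat; lra|]. nra.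
Qed.
Lemma B_nonneg : 0 <= B.
Proof. pose proof A_pos; pose proof lam_pos. unfold B. nra. Qed.
Lemma trap_potential_nonneg y : (y < n i)%nat -> 0 <= trap_potential y.
Proof.
  intros Hy. pose proof A_pos; pose proof B_nonneg; pose proof (HG_nonneg y Hy).
  unfold trap_potential. nra.
Qed.
Lemma trap_potential_v : trap_potential (v i) = w0.
Proof.
  pose proof lam_pos; pose proof G_v_nonneg. unfold trap_potential, B, A. field. nra.
Qed.

Lemma markov_trap_potential y : (y < n i)%nat ->
  markov (n i) (adj i) trap_potential y = A + B * markov (n i) (adj i) G y.
Proof.
  intros Hy. unfold trap_potential. rewrite (markov_plus_scal (n i) (adj i) (fun _ => A) G B y).
  rewrite markov_const; auto.
Qed.

Lemma trap_drift_off_v y : (y < n i)%nat -> y <> v i ->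
  markov (n i) (adj i) trap_potential y <= (1 + lam) * trap_potential y.
Proof.
  intros Hy Hyv. rewrite markov_trap_potential by auto. pose proof (HG_defect y Hy Hyv).
  pose proof A_pos; pose proof B_nonneg; pose proof lam_pos; pose proof (HG_nonneg y Hy).
  unfold trap_potential. assert (B * (3 / 2) <= lam * A) by (unfold B; nra).
  assert (B * markov (n i) (adj i) G y <= B * (G y + 3/2)) by (apply Rmult_le_compat_l; lra).
  assert (0 <= lam * (B * G y)) by (apply Rmult_le_pos; [lra|apply Rmult_le_pos; lra]).
  lra.
Qed.

(* [v_i] has three neighbours in [E_i] and one, [h_i], of potential [3/2]. *)
Lemma trap_drift_at_v :
  3 * markov (n i) (adj i) trap_potential (v i) + 1 / 2 <= 4 * ((1 + lam) * trap_potential (v i)).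
Proof.
  assert (Hvi : (v i < n i)%nat) by auto.
  rewrite markov_trap_potential by auto. pose proof HG_defect_v.
  pose proof A_pos; pose proof B_nonneg; pose proof lam_pos; pose proof G_v_nonneg.
  pose proof hr_ge4; pose proof nr_ge3.
  assert (Hw : trap_potential (v i) = w0) by apply trap_potential_v.
  assert (Hjump : 1 / 2 <= trap_potential (v i) + 3 * B * (nr - 3 / 2)).
  { rewrite Hw.
    assert (HB : B = lam * w0 / (2 + lam * G (v i))) by (unfold B, A; field; nra).
    assert (Hlg : lam * G (v i) <= 1) by (unfold lam, hr, nr; exact HG_v_small).
    assert (Hw0 : 0 < w0) by (unfold w0; apply Rdiv_lt_0_compat; lra).
    assert (3 * B * (nr - 3 / 2) >= lam * w0 * (nr - 3/2)).
    { rewrite HB. apply Rle_ge. unfold Rdiv.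
      assert (0 < / (2 + lam * G (v i))) by (apply Rinv_0_lt_compat; nra).
      assert (/ 3 <= / (2 + lam * G (v i))) by (apply Rinv_le_contravar; nra).
      assert (0 <= lam * w0 * (nr - 3/2)) by (apply Rmult_le_pos; nra).
      nra. }
    assert (lam * nr = 4 / hr) by (unfold lam; field; lra).
    assert (w0 * (1 + 2 / hr) = 1 / 2) by (unfold w0; field; lra).
    assert (lam * w0 * (nr - 3 / 2) >= w0 * (2 / hr)).
    { assert (lam * w0 * (nr - 3/2) = w0 * (lam * nr) - 3/2 * lam * w0) by ring.
      assert (lam * nr / 2 >= 3 / 2 * lam) by nra.
      nra. }
    nra. }
  assert (1 / 2 <= A + B * G (v i) + 3 * (B * nr) - 9 / 2 * B)
    by (change (trap_potential (v i)) with (A + B * G (v i)) in Hjump; lra).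
  assert (HP : B * markov (n i) (adj i) G (v i) <= B * G (v i) - B * nr + 3 / 2 * B).
  { replace (B * G (v i) - B * nr + 3 / 2 * B) with (B * (G (v i) - nr + 3 / 2)) by ring.
    apply Rmult_le_compat_l; auto. unfold nr. lra. }
  assert (0 <= lam * trap_potential (v i))
    by (apply Rmult_le_pos; [lra|apply trap_potential_nonneg; auto]).
  unfold trap_potential in *; cbv beta in *. lra.
Qed.

Lemma slope_pos : 0 < slope.
Proof. pose proof hr_ge4. unfold slope. apply Rdiv_lt_0_compat; lra. Qed.

Lemma INR_h_pred : INR (h i - 1) = hr - 1.
Proof. unfold hr. rewrite minus_INR by lia. simpl. ring. Qed.

Lemma line_potential_le j : (j <= h i)%nat -> line_potential j = 1 - INR (j - 1) * slope.
Proof. intros H. unfold line_potential. apply Nat.leb_le in H. rewrite H. reflexivity. Qed.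

Lemma line_potential_ge j : (h i <= j)%nat -> line_potential j = 1 / 2.
Proof.
  intros H. unfold line_potential. destruct (Nat.leb_spec j (h i)); [|reflexivity].
  assert (j = h i) by lia. subst j. rewrite INR_h_pred. pose proof hr_ge4. unfold slope. field. lra.
Qed.

Lemma line_potential_bounds j : 1 / 2 <= line_potential j <= 1.
Proof.
  destruct (Nat.le_gt_cases j (h i)) as [H|H].
  - rewrite line_potential_le by auto. pose proof slope_pos.
    assert (INR (j - 1) <= hr - 1) by (rewrite <- INR_h_pred; apply le_INR; lia).
    assert (0 <= INR (j - 1)) by apply pos_INR.
    assert ((hr - 1) * slope = 1 / 2) by (pose proof hr_ge4; unfold slope; field; lra).
    split; nra.
  - rewrite line_potential_ge by lia. lra.
Qed.

Lemma w0_le_slope : w0 <= 1 / 2 - slope.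
Proof.
  pose proof hr_ge4. unfold w0, slope.
  assert (hr / (2 * (hr + 2)) = 1/2 - 1 / (hr + 2)) by (field; lra).
  rewrite H0.
  assert (1 / (2 * (hr - 1)) <= 1 / (hr + 2)).
  { apply Rmult_le_reg_r with ((2 * (hr - 1)) * (hr + 2)). nra.
    replace (1 / (2 * (hr - 1)) * (2 * (hr - 1) * (hr + 2))) with (hr + 2) by (field; lra).
    replace (1 / (hr + 2) * (2 * (hr - 1) * (hr + 2))) with (2 * (hr - 1)) by (field; lra). lra. }
  lra.
Qed.

Lemma potential_ge1 x : valid x -> 1 <= potential x.
Proof.
  destruct x as [j|[i' y]]; simpl; intros Hg.
  - pose proof (line_potential_bounds j). lra.
  - destruct (Nat.eqb_spec i' i).
    + subst i'. pose proof (trap_potential_nonneg y (proj2 Hg)). lra.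
    + pose proof (line_potential_bounds (h i')). lra.
Qed.

Lemma valid_nbrs x w : valid x -> In w (nbrs h n v adj x) -> valid w.
Proof.
  destruct x as [j|[i' y]]; simpl; intros Hg Hw.
  - apply in_app_or in Hw. destruct Hw as [Hw|Hw].
    + destruct j; simpl in Hw; [contradiction|]. destruct Hw as [<-|[]]. exact I.
    + simpl in Hw. destruct Hw as [<-|Hw]; [exact I|].
      apply in_map_iff in Hw. destruct Hw as [i2 [<- Hi2]].
      apply filter_In in Hi2. destruct Hi2 as [Hi2 _]. apply in_seq in Hi2.
      simpl. split; [lia|]. apply Hv. lia.
  - apply in_app_or in Hw. destruct Hw as [Hw|Hw].
    + apply in_map_iff in Hw. destruct Hw as [z [<- Hz]].
      apply filter_In in Hz. destruct Hz as [Hz _]. apply in_seq in Hz. simpl. split; [tauto|lia].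
    + destruct (Nat.eqb y (v i')); simpl in Hw; [destruct Hw as [<-|[]]; exact I|contradiction].
Qed.

Lemma growth_ge1 : 1 <= growth.
Proof. pose proof lam_pos. unfold growth. lra. Qed.

Lemma potential_inl j : potential (inl j) = 1 + line_potential j.
Proof. reflexivity. Qed.

Lemma drift_of_sum_le x c : valid x ->
  sumR (map weighted (nbrs h n v adj x)) <= INR (length (nbrs h n v adj x)) * c ->
  c <= growth * potential x -> drift_ok x.
Proof.
  intros Hg H1 H2. pose proof (potential_ge1 x Hg). pose proof growth_ge1.
  apply Rle_trans with (Rmax c 0).
  - apply mean_over_le; [apply Rmax_r|]. eapply Rle_trans; [exact H1|].
    apply Rmult_le_compat_l; [apply pos_INR|apply Rmax_l].
  - apply Rmax_lub; auto. nra.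
Qed.

Lemma drift_origin : drift_ok (inl 0%nat).
Proof.
  apply drift_of_sum_le with 2; [exact I| |].
  - change (nbrs h n v adj (inl 0%nat)) with [@inl nat (nat * nat) 1%nat]. simpl.
    unfold weighted. simpl is_origin. rewrite potential_inl, line_potential_le by lia. simpl. lra.
  - rewrite potential_inl, line_potential_le by lia. simpl. pose proof growth_ge1. lra.
Qed.

Lemma drift_one : drift_ok (inl 1%nat).
Proof.
  assert (Hn : nbrs h n v adj (inl 1%nat) = [inl 0%nat; inl 2%nat]).
  { simpl. destruct (Nat.eqb_spec (h 1) 1); [pose proof (Hhinc 0); lia|reflexivity]. }
  apply drift_of_sum_le with 2; [exact I| |].
  - rewrite Hn. simpl. unfold weighted. simpl is_origin.
    rewrite !potential_inl, !line_potential_le by lia. simpl. unfold weight.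
    pose proof hr_ge4. pose proof slope_pos.
    (* the bonus [1/(8 h)] for stepping onto the origin is paid for by the slope *)
    assert (1 / (8 * hr) <= slope / 2).
    { unfold slope. apply Rmult_le_reg_r with (8 * hr * (hr - 1)); [nra|]. field_simplify; nra. }
    nra.
  - rewrite potential_inl, line_potential_le by lia. simpl. pose proof growth_ge1. lra.
Qed.

Lemma line_potential_concave j : (1 <= j)%nat -> S j <> h i ->
  line_potential j + line_potential (S (S j)) <= 2 * line_potential (S j).
Proof.
  intros Hj Hne.
  destruct (Nat.le_gt_cases (S (S j)) (h i)) as [H|H].
  - rewrite !line_potential_le by lia.
    replace (S (S j) - 1)%nat with (S j) by lia. replace (S j - 1)%nat with j by lia.
    rewrite !S_INR. rewrite minus_INR by lia. simpl. lra.
  - rewrite !line_potential_ge by lia. lra.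
Qed.

Let line_traps j : list Vtx :=
  map (fun i0 => inr (i0, v i0)) (filter (fun i0 => Nat.eqb (h i0) j) (seq 1 j)).

Lemma in_line_traps j w :
  In w (line_traps j) -> exists i', w = inr (i', v i') /\ h i' = j /\ (1 <= i')%nat.
Proof.
  intros Hw. apply in_map_iff in Hw. destruct Hw as [i' [<- Hi']].
  apply filter_In in Hi'. destruct Hi' as [Hs He]. apply in_seq in Hs. apply Nat.eqb_eq in He.
  exists i'. repeat split; auto; lia.
Qed.

Lemma sumR_line_nbrs j : (1 <= j)%nat ->
  sumR (map weighted (nbrs h n v adj (inl (S j)))) =
  2 + line_potential j + line_potential (S (S j)) + sumR (map weighted (line_traps (S j))).
Proof.
  intros Hj. change (nbrs h n v adj (inl (S j))) with (inl j :: inl (S (S j)) :: line_traps (S j)).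
  simpl map. simpl sumR. unfold weighted at 1 2. rewrite !is_origin_inl_pos by lia.
  rewrite !potential_inl. ring.
Qed.

Lemma drift_line j : (1 <= j)%nat -> drift_ok (inl (S j)).
Proof.
  intros Hj. pose proof growth_ge1. pose proof (potential_ge1 (inl (S j)) I).
  apply drift_of_sum_le with (potential (inl (S j))); [exact I| |nra].
  change (length (nbrs h n v adj (inl (S j)))) with (S (S (length (line_traps (S j))))).
  rewrite sumR_line_nbrs, !S_INR, potential_inl by auto.
  destruct (Nat.eq_dec (S j) (h i)) as [Heq|Hne].
  - (* [S j = h i]: the neighbour [v_i] has potential [1 + w0 <= 3/2 - slope] *)
    rewrite (sumR_const _ _ weighted (1 + w0)).
    2: { intros w Hw. destruct (in_line_traps _ _ Hw) as [i' [-> [Hh' _]]].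
         assert (i' = i) by (apply (incr_inj h Hhinc); lia). subst i'.
         unfold weighted. simpl. rewrite Nat.eqb_refl, trap_potential_v. ring. }
    assert (In (inr (i, v i)) (line_traps (S j))).
    { apply in_map_iff. exists i. split; [reflexivity|]. apply filter_In. split.
      - apply in_seq. pose proof (incr_gt_id h Hhinc i Hh0). lia.
      - apply Nat.eqb_eq. auto. }
    assert (1 <= INR (length (line_traps (S j)))).
    { apply (le_INR 1). destruct (line_traps (S j)); [contradiction|simpl; lia]. }
    rewrite line_potential_le, !line_potential_ge by lia.
    assert (INR (j - 1) = hr - 2).
    { rewrite minus_INR by lia. unfold hr. rewrite <- Heq, (S_INR j). simpl. lra. }
    assert ((hr - 1) * slope = 1 / 2) by (pose proof hr_ge4; unfold slope; field; lra).
    pose proof w0_le_slope. pose proof slope_pos. nra.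
  - rewrite (sumR_const _ _ weighted (1 + line_potential (S j))).
    2: { intros w Hw. destruct (in_line_traps _ _ Hw) as [i' [-> [Hh' _]]].
         unfold weighted. simpl. destruct (Nat.eqb_spec i' i); [subst; lia|]. rewrite Hh'. ring. }
    pose proof (line_potential_concave j Hj Hne). pose proof (pos_INR (length (line_traps (S j)))).
    nra.
Qed.

Lemma sumR_trap_nbrs y : (y < n i)%nat ->
  sumR (map weighted (map (fun z => inr (i, z)) (filter (adj i y) (seq 0 (n i))))) =
  3 * (1 + markov (n i) (adj i) trap_potential y).
Proof.
  intros Hy. rewrite map_map.
  rewrite (map_ext _ (fun z => 1 + trap_potential z)).
  2: { intros z. unfold weighted. simpl is_origin. simpl potential. rewrite Nat.eqb_refl. lra. }
  rewrite sumR_filter, sumR_seq.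
  rewrite <- (trans3_row_sum (n i) (adj i) (Hreg i Hi) y Hy) at 1.
  unfold markov. rewrite <- rsum_plus, <- rsum_scal_l. apply rsum_ext. intros z _.
  unfold trans3. destruct (adj i y z); field.
Qed.

Lemma length_trap_nbrs y : (y < n i)%nat -> length (filter (adj i y) (seq 0 (n i))) = 3%nat.
Proof. intros Hy. destruct (Hreg i Hi) as [_ [_ H3]]. apply H3; auto. Qed.

Lemma drift_trap y : (y < n i)%nat ->
  drift_ok (inr (i, y)).
Proof.
  intros Hy.
  set (F := filter (adj i y) (seq 0 (n i))).
  assert (Hn : nbrs h n v adj (inr (i, y)) =
    map (fun z => inr (i, z)) F ++ (if Nat.eqb y (v i) then [inl (h i)] else [])) by reflexivity.
  assert (Hpsi : potential (inr (i, y)) = 1 + trap_potential y)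
    by (simpl potential; rewrite Nat.eqb_refl; reflexivity).
  pose proof growth_ge1. pose proof (trap_potential_nonneg y Hy).
  apply drift_of_sum_le with (growth * potential (inr (i, y))); [simpl; auto| |lra].
  rewrite Hn, map_app, sumR_app, length_app, length_map. unfold F.
  rewrite sumR_trap_nbrs, length_trap_nbrs by auto.
  rewrite Hpsi.
  destruct (Nat.eqb_spec y (v i)) as [Hyv|Hyv].
  - subst y. simpl.
    assert (Hgh : weighted (inl (h i)) = 3 / 2).
    { unfold weighted. pose proof (incr_gt_id h Hhinc i Hh0). rewrite is_origin_inl_pos by lia.
      rewrite potential_inl, line_potential_ge by lia. lra. }
    rewrite Hgh. pose proof trap_drift_at_v. unfold growth in *. nra.
  - simpl. pose proof (trap_drift_off_v y Hy Hyv). unfold growth in *. nra.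
Qed.

Lemma drift_other_trap i' y : (1 <= i')%nat -> i' <> i -> (y < n i')%nat ->
  drift_ok (inr (i', y)).
Proof.
  intros Hi' Hne Hy.
  assert (Hpsi' : forall z, potential (inr (i', z)) = 1 + line_potential (h i')).
  { intros z. simpl potential. destruct (Nat.eqb_spec i' i); [contradiction|reflexivity]. }
  assert (Hpsi := Hpsi' y).
  pose proof growth_ge1. pose proof (line_potential_bounds (h i')).
  apply drift_of_sum_le with (1 + line_potential (h i')); [simpl; auto| |rewrite Hpsi; nra].
  right. apply sumR_const. intros w Hw. simpl in Hw. apply in_app_or in Hw. destruct Hw as [Hw|Hw].
  - apply in_map_iff in Hw. destruct Hw as [z [<- _]].
    unfold weighted. simpl is_origin. rewrite Rmult_1_l. exact (Hpsi' z).
  - destruct (Nat.eqb y (v i')); simpl in Hw; [|contradiction]. destruct Hw as [<-|[]].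
    unfold weighted. pose proof (incr_gt_id h Hhinc i' Hh0). rewrite is_origin_inl_pos by lia.
    rewrite Rmult_1_l. rewrite potential_inl. reflexivity.
Qed.

Lemma drift_all x : valid x ->
  drift_ok x.
Proof.
  destruct x as [j|[i' y]]; intros Hg.
  - destruct j as [|[|j]].
    + apply drift_origin.
    + apply drift_one.
    + apply drift_line. lia.
  - destruct Hg as [Hi' Hy]. destruct (Nat.eq_dec i' i).
    + subst. apply drift_trap; auto.
    + apply drift_other_trap; auto.
Qed.

Lemma visits_prob_origin_le t m :
  visits_prob (nbrs h n v adj) t (inl 0%nat) m <= growth ^ t * (/ weight) ^ m * 2.
Proof.
  replace 2 with (potential (inl 0%nat)).
  2: { rewrite potential_inl, line_potential_le by lia. simpl. lra. }
  apply (visits_prob_le_potential (nbrs h n v adj) valid potential growth weight).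
  - apply growth_ge1.
  - unfold weight. pose proof hr_ge4.
    assert (0 < 1 / (8 * hr)) by (apply Rdiv_lt_0_compat; lra). lra.
  - apply potential_ge1.
  - apply valid_nbrs.
  - apply drift_all.
  - exact I.
Qed.

End Potential.

Lemma spectral_bound_mono rho rho' N a :
  rho <= rho' -> spectral_bound rho N a -> spectral_bound rho' N a.
Proof.
  intros Hle Hspec lam f Hf. destruct (Hspec lam f Hf) as [H1 H2].
  split; auto. intros Hl. specialize (H2 Hl). lra.
Qed.

Lemma return_before_le rho (h n v : nat -> nat) (adj : nat -> nat -> nat -> bool) i M T :
  0 < rho < 1 ->
  (0 < h 0)%nat -> (forall i, (h i < h (S i))%nat) ->
  (forall i, (1 <= i)%nat -> simple_3_regular (n i) (adj i)) ->
  (forall i, (1 <= i)%nat -> spectral_bound rho (n i) (adj i)) ->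
  (forall i, (1 <= i)%nat -> (v i < n i)%nat) ->
  (1 <= i)%nat -> (4 <= h i)%nat -> (h i <= n i)%nat -> 8 / (1 - rho) <= INR (h i) ->
  return_before (nbrs h n v adj) M T <=
    (1 + 4 / (INR (h i) * INR (n i))) ^ (T - 1) * (/ (1 + 1 / (8 * INR (h i)))) ^ M * 2.
Proof.
  intros Hrho Hh0 Hhinc Hreg Hspec Hv Hi Hh4 Hhn Hh8.
  assert (Hn3 : (3 <= n i)%nat) by lia.
  assert (Hhr : 0 < INR (h i)) by (apply lt_0_INR; lia).
  assert (Hnr : 0 < INR (n i)) by (apply lt_0_INR; lia).
  pose proof (markov_contraction (n i) (adj i) rho (Hreg i Hi) (Hspec i Hi)) as Hcontr.
  destruct (green_exists (n i) (adj i) rho (v i) (Hreg i Hi) ltac:(lra) ltac:(lra) Hcontr (Hv i Hi))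
    as [G [HG [HG_off HG_v]]].
  apply (visits_prob_origin_le h n v adj Hh0 Hhinc Hreg Hv i Hi Hh4 Hn3 G); auto.
  - intros y Hy. apply HG; auto.
  - destruct (HG (v i) (Hv i Hi)) as [_ HGv].
    apply Rle_trans with (4 / (INR (h i) * INR (n i)) * (2 * INR (n i) / (1 - rho))).
    + apply Rmult_le_compat_l; auto. apply Rlt_le, Rdiv_lt_0_compat; nra.
    + replace (4 / (INR (h i) * INR (n i)) * (2 * INR (n i) / (1 - rho)))
        with (8 / (1 - rho) / INR (h i)) by (field; lra).
      apply Rdiv_le_iff; lra.
Qed.

Lemma exp_mul_INR x k : exp (x * INR k) = exp x ^ k.
Proof.
  induction k; simpl pow.
  - rewrite Rmult_0_r, exp_0. reflexivity.
  - rewrite S_INR, Rmult_plus_distr_l, Rmult_1_r, exp_plus, IHk. ring.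
Qed.

Lemma exp_le_compat x y : x <= y -> exp x <= exp y.
Proof. intros [H|H]; [left; apply exp_increasing; auto|subst; right; reflexivity]. Qed.

Lemma pow_1_plus_le_exp x k : 0 <= x -> (1 + x) ^ k <= exp (x * INR k).
Proof.
  intros Hx. rewrite exp_mul_INR. apply pow_incr. split; [lra|]. apply exp_ineq1_le.
Qed.

Lemma growth_pow_le (hh nn k T : nat) :
  (0 < hh)%nat -> (0 < nn)%nat -> (T <= k * hh * nn)%nat ->
  (1 + 4 / (INR hh * INR nn)) ^ (T - 1) <= exp (4 * INR k).
Proof.
  intros Hh Hn HT.
  assert (0 < INR hh) by (apply lt_0_INR; auto). assert (0 < INR nn) by (apply lt_0_INR; auto).
  assert (Hlam : 0 <= 4 / (INR hh * INR nn)) by (apply Rlt_le, Rdiv_lt_0_compat; nra).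
  eapply Rle_trans; [apply pow_1_plus_le_exp; auto|]. apply exp_le_compat.
  replace (4 * INR k) with (4 / (INR hh * INR nn) * (INR k * INR hh * INR nn)) by (field; lra).
  apply Rmult_le_compat_l; auto. rewrite <- !mult_INR. apply le_INR. lia.
Qed.

(* Bernoulli: each block of [8 h] steps of weight [1 + 1/(8h)] at least doubles. *)
Lemma weight_pow_le (hh k M : nat) : (0 < hh)%nat -> (64 * k * hh <= M)%nat ->
  (/ (1 + 1 / (8 * INR hh))) ^ M <= / 2 ^ (8 * k).
Proof.
  intros Hh HM. assert (0 < INR hh) by (apply lt_0_INR; auto).
  set (w := 1 + 1 / (8 * INR hh)).
  assert (0 < 1 / (8 * INR hh)) by (apply Rdiv_lt_0_compat; lra).
  assert (Hw : 1 <= w) by (unfold w; lra).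
  assert (Hblock : 2 <= w ^ (8 * hh)).
  { eapply Rle_trans; [|apply poly; apply Rdiv_lt_0_compat; lra].
    rewrite mult_INR. replace (INR 8) with 8 by (simpl; ring). right. field. lra. }
  rewrite pow_inv. apply Rinv_le_contravar; [apply pow_lt; lra|].
  apply Rle_trans with ((w ^ (8 * hh)) ^ (8 * k)); [apply pow_incr; lra|].
  rewrite <- pow_mult. apply Rle_pow; auto. lia.
Qed.

Lemma exp_4k_le_pow2 k : exp (4 * INR k) * / 2 ^ (8 * k) <= exp (- INR k).
Proof.
  assert (He5 : exp 5 <= 256).
  { replace 5 with (1 * INR 5) by (simpl; ring). rewrite exp_mul_INR.
    apply Rle_trans with (3 ^ 5); [|simpl; lra].
    apply pow_incr. split; [apply Rlt_le, exp_pos|apply exp_le_3]. }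
  assert (H2k : 0 < 2 ^ (8 * k)) by (apply pow_lt; lra).
  assert (exp (5 * INR k) <= 2 ^ (8 * k)).
  { rewrite exp_mul_INR, pow_mult. apply pow_incr. split; [apply Rlt_le, exp_pos|simpl; lra]. }
  replace (exp (4 * INR k)) with (exp (5 * INR k) * exp (- INR k))
    by (rewrite <- exp_plus; f_equal; ring).
  assert (exp (5 * INR k) * / 2 ^ (8 * k) <= 1).
  { apply Rmult_le_reg_r with (2 ^ (8 * k)); auto.
    rewrite Rmult_assoc, Rinv_l, Rmult_1_r, Rmult_1_l by lra. auto. }
  pose proof (exp_pos (- INR k)). nra.
Qed.

Lemma drift_bound_le_exp (hh nn k M T : nat) :
  (0 < hh)%nat -> (0 < nn)%nat -> (T <= k * hh * nn)%nat -> (64 * k * hh <= M)%nat ->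
  (1 + 4 / (INR hh * INR nn)) ^ (T - 1) * (/ (1 + 1 / (8 * INR hh))) ^ M * 2
    <= 2 * exp (- INR k).
Proof.
  intros Hh Hn HT HM.
  assert (0 < INR hh) by (apply lt_0_INR; auto). assert (0 < INR nn) by (apply lt_0_INR; auto).
  assert (0 < 4 / (INR hh * INR nn)) by (apply Rdiv_lt_0_compat; nra).
  assert (0 < 1 / (8 * INR hh)) by (apply Rdiv_lt_0_compat; lra).
  pose proof (exp_4k_le_pow2 k).
  apply Rle_trans with (exp (4 * INR k) * / 2 ^ (8 * k) * 2); [|lra].
  apply Rmult_le_compat_r; [lra|]. apply Rmult_le_compat.
  - apply pow_le. lra.
  - apply pow_le, Rlt_le, Rinv_0_lt_compat. lra.
  - apply growth_pow_le; auto.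
  - apply weight_pow_le; auto.
Qed.

Lemma INR_Rceil_ge x : 0 <= x -> x <= INR (Z.to_nat (Rceil x)).
Proof.
  intros Hx. unfold Rceil. destruct (base_Int_part (- x)) as [H1 H2].
  assert (Hz0 : (0 <= - Int_part (- x))%Z) by (apply le_IZR; rewrite opp_IZR; lra).
  rewrite INR_IZR_INZ, Z2Nat.id, opp_IZR by auto. lra.
Qed.

Theorem proposition4p5 (rho : R) (Hrho : rho < 1) :
  exists (F : nat -> nat) (C c : R), 0 < C /\ 0 < c /\
  forall (h n v : nat -> nat) (adj : nat -> nat -> nat -> bool),
    (0 < h 0)%nat -> (0 < n 0)%nat ->
    (forall i, (h i < h (S i))%nat) -> (forall i, (n i < n (S i))%nat) ->
    (forall i, n i = (h i ^ 15)%nat) ->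
    (forall i, (1 <= i)%nat -> simple_3_regular (n i) (adj i)) ->
    (forall i, (1 <= i)%nat -> spectral_bound rho (n i) (adj i)) ->
    (forall i, (1 <= i)%nat -> (v i < n i)%nat) ->
    (forall i, (1 <= i)%nat -> (h i >= F (n (i - 1) * h (i - 1) ^ 2))%nat) ->
    forall i k : nat, (1 <= i)%nat -> (1 <= k)%nat ->
      return_before (nbrs h n v adj)
        (Z.to_nat (Rceil (C * INR k * INR (h i)))) (k * h i * n i)
      <= C * exp (- c * INR k).
Proof.
  set (r := Rmax rho (1 / 2)).
  assert (Hr : 1 / 2 <= r < 1) by (split; [apply Rmax_r|apply Rmax_lub_lt; lra]).
  destruct (INR_unbounded (8 / (1 - r))) as [h0 Hh0r].
  exists (fun _ => Nat.max h0 4), 64, 1. split; [lra|]. split; [lra|].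
  intros h n v adj Hh0 _ Hhinc _ Hnh Hreg Hspec Hv HF i k Hi Hk.
  specialize (HF i Hi).
  assert (Hh8 : 8 / (1 - r) <= INR (h i))
    by (apply Rlt_le, Rlt_le_trans with (INR h0); auto; apply le_INR; lia).
  assert (Hhn : (h i <= n i)%nat)
    by (rewrite Hnh, <- (Nat.pow_1_r (h i)) at 1; apply Nat.pow_le_mono_r; lia).
  assert (HM : (64 * k * h i <= Z.to_nat (Rceil (64 * INR k * INR (h i))))%nat).
  { apply INR_le. rewrite !mult_INR. replace (INR 64) with 64 by (simpl; ring).
    apply INR_Rceil_ge. pose proof (pos_INR k). pose proof (pos_INR (h i)). nra. }
  assert (Hspec_r : forall j, (1 <= j)%nat -> spectral_bound r (n j) (adj j))
    by (intros j Hj; apply spectral_bound_mono with rho; auto; apply Rmax_l).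
  eapply Rle_trans;
    [apply (return_before_le r h n v adj i _ _ ltac:(lra) Hh0 Hhinc Hreg Hspec_r Hv Hi);
     auto; lia|].
  eapply Rle_trans; [apply drift_bound_le_exp; auto; lia|].
  replace (- (1) * INR k) with (- INR k) by ring. pose proof (exp_pos (- INR k)). lra.
Qed.
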